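(* Let $q\in\mathbb{C}$ with $|q|<1$, $r\in\mathbb{N}$, $n\in\mathbb{Z}_{+}=\{0,1,2,\dots\}$, $x$ real with $x\neq0,-1,-2,\dots$, and let $f\in\mathbb{N}$ be odd. Then $$E_{n,q}^{(r)}(x)=\left(\frac{[2]_q}{[2]_{q^f}}\right)^r[f]_q^n\sum_{a_1,\dots,a_r=0}^{f-1}(-1)^{a_1+\cdots+a_r}E_{n,q^f}^{(r)}\!\left(\frac{a_1+\cdots+a_r+x}{f}\right),$$ and moreover $$E_{n,q}^{(r)}(x)=\frac{[2]_q^r}{(1-q)^n}\sum_{l=0}^{n}\binom{n}{l}(-q^x)^l\sum_{a_1,\dots,a_r=0}^{f-1}\frac{(-1)^{a_1+\cdots+a_r}q^{l(a_1+\cdots+a_r)}}{(1+q^{lf})^r}.$$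
   Context: For a complex number $q$ with $|q|<1$ and $x$ real, $[x]_q=\frac{1-q^x}{1-q}$ (so $[2]_q=1+q$, $[2]_{q^f}=1+q^f$, $[f]_q=\frac{1-q^f}{1-q}$). For $r\in\mathbb{N}$, the $q$-Euler polynomials of order $r$ are defined by the generating function $$[2]_q^r\sum_{m_1,\dots,m_r=0}^{\infty}(-1)^{m_1+\cdots+m_r}e^{[m_1+\cdots+m_r+x]_q t}=\sum_{n=0}^{\infty}E_{n,q}^{(r)}(x)\frac{t^n}{n!},$$ and $E_{n,q^f}^{(r)}$ denotes the same with $q$ replaced by $q^f$. *)

From mathcomp Require Import all_boot all_order all_algebra.
From mathcomp Require Import all_classical all_reals all_analysis.
From mathcomp Require Export complex.
Import Order.TTheory GRing.Theory Num.Theory.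
Import numFieldNormedType.Exports.

Set Implicit Arguments.
Unset Strict Implicit.
Unset Printing Implicit Defensive.

Local Open Scope ring_scope.
Local Open Scope classical_set_scope.
Local Open Scope ring_scope.
Local Open Scope complex_scope.

Definition carg (R : realType) (z : R[i]) : R :=
  let a := complex.Re z in let b := complex.Im z in
  if 0 < a then atan (b / a)
  else if a < 0 then (if 0 <= b then atan (b / a) + pi else atan (b / a) - pi)
  else if 0 < b then pi / 2 else if b < 0 then - (pi / 2) else 0.

(* Principal power q^x = exp (x Log q) for complex q <> 0 and real x;
   convention 0^x := 0 (only used for x <> 0 in the statement). *)
Definition qpow (R : realType) (q : R[i]) (x : R) : R[i] :=
  if q == 0 then 0
  else ((Num.sqrt (complex.Re q ^+ 2 + complex.Im q ^+ 2)) `^ x)%:C * (cos (x * carg q) +i* sin (x * carg q)).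

(* Limits of complex sequences / functions, componentwise
   (convergence in C = convergence of real and imaginary parts). *)
Definition clim (R : realType) (u : nat -> R[i]) : R[i] :=
  (limn (fun k => complex.Re (u k))) +i* (limn (fun k => complex.Im (u k))).

Definition cseries (R : realType) (u : nat -> R[i]) : R[i] :=
  clim (fun N => \sum_(k < N) u k).

Definition cabel (R : realType) (g : R -> R[i]) : R[i] :=
  (lim ((fun s => complex.Re (g s)) @ (1 : R)^'-)) +i*
  (lim ((fun s => complex.Im (g s)) @ (1 : R)^'-)).

(* r-fold iterated sum  sum_{m_1>=0} ... sum_{m_r>=0} F (m_1 + ... + m_r) *)
Fixpoint msum (R : realType) (r : nat) (F : nat -> R[i]) : R[i] :=
  if r is r'.+1 then cseries (fun m => msum r' (fun k => F (m + k)%N))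
  else F 0%N.

(* q-number [y]_b where the power b^y is given by pw y *)
Definition qnum (R : realType) (b : R[i]) (pw : R -> R[i]) (y : R) : R[i] :=
  (1 - pw y) / (1 - b).

(* Coefficient of t^n/n! in the generating function
     [2]_b^r sum_{m_1..m_r>=0} (-1)^(m_1+..+m_r) e^{[m_1+..+m_r+x]_b t},
   i.e. [2]_b^r sum_m (-1)^|m| [|m|+x]_b^n ; the (non-absolutely convergent,
   in fact divergent) alternating multiple sum is taken in the Abel sense. *)
Definition EulerGen (R : realType) (b : R[i]) (pw : R -> R[i])
    (r n : nat) (x : R) : R[i] :=
  cabel (fun s : R => (1 + b) ^+ r *
    msum r (fun N => (-1) ^+ N * (s ^+ N)%:C * (qnum b pw (N%:R + x)) ^+ n)).

Definition qEuler (R : realType) (q : R[i]) (r n : nat) (x : R) : R[i] :=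
  EulerGen q (qpow q) r n x.

(* E_{n,q^f}^{(r)}(y): q replaced by q^f, with (q^f)^y := q^{f y}
   (same branch of log as for q). *)
Definition qEuler_f (R : realType) (q : R[i]) (f r n : nat) (y : R) : R[i] :=
  EulerGen (q ^+ f) (fun z => qpow q (f%:R * z)) r n y.

From Pilot Require Import Defs.
From mathcomp Require Import all_boot all_order all_algebra.
From mathcomp Require Import all_classical all_reals all_analysis.
From mathcomp Require Import complex.
From mathcomp Require Import ring lra.
Import Order.TTheory GRing.Theory Num.Theory.
Import numFieldNormedType.Exports.
Local Open Scope classical_set_scope.
Local Open Scope ring_scope.
Local Open Scope complex_scope.

(** For [0 <= s < 1] the damped multiple series defining the Euler
polynomials converges absolutely: expanding [[N + x]_b^n] binomially in
[b^N] turns it into [r]-fold geometric series in [- s b^l], whose sum is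
[(1 + s b^l)^-r].  Letting [s -> 1] gives the closed form
[E_{n,b}^(r)(x) = [2]_b^r / (1 - b)^n * sum_l C(n,l) (- b^x)^l / (1 + b^l)^r].
For odd [f] the box sum [sum_{a in [0,f)^r} (- z)^|a|] equals
[((1 + z^f) / (1 + z))^r]; with [z = q^l] it converts [(1 + q^{lf})^-r]
into [(1 + q^l)^-r], which gives the second formula, and the first one is the
closed form for [q^f] summed over the shifted arguments [(|a| + x) / f]. *)

Section FieldFacts.
Variable K : fieldType.
Implicit Type z : K.

Lemma sum_expr_geom z N : z != 1 -> \sum_(k < N) z ^+ k = (z ^+ N - 1) / (z - 1).
Proof. by move=> z1; rewrite subrX1 mulrAC mulfV ?mul1r // subr_eq0. Qed.

Lemma sum_alt_expr_odd z f : odd f -> 1 + z != 0 ->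
  \sum_(j < f) (- z) ^+ j = (1 + z ^+ f) / (1 + z).
Proof.
move=> f_odd z_neq; have Nz1 : - z != 1 by apply: contra z_neq => /eqP <-; rewrite addNr.
rewrite sum_expr_geom // exprNn -signr_odd f_odd expr1 mulN1r.
by rewrite -[- _ - 1]opprD -[- z - 1]opprD invrN mulrNN addrC [z + 1]addrC.
Qed.

Lemma alt_box_sum z r f :
  \sum_(a : {ffun 'I_r -> 'I_f})
     (-1) ^+ (\sum_(i < r) (a i : nat))%N * z ^+ (\sum_(i < r) (a i : nat))%N
  = (\sum_(j < f) (- z) ^+ j) ^+ r.
Proof.
under eq_bigr => a _ do rewrite -exprMn mulN1r
  (big_morph (fun k => (- z) ^+ k) (exprD (- z)) (expr0 (- z))).
by rewrite -(bigA_distr_bigA (fun i (j : 'I_f) => (- z) ^+ j)) prodr_const card_ord.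
Qed.

Lemma alt_box_sum_odd z r f : odd f -> 1 + z != 0 -> 1 + z ^+ f != 0 ->
  \sum_(a : {ffun 'I_r -> 'I_f})
     (-1) ^+ (\sum_(i < r) (a i : nat))%N * z ^+ (\sum_(i < r) (a i : nat))%N
       / (1 + z ^+ f) ^+ r
  = ((1 + z) ^+ r)^-1.
Proof.
move=> f_odd z_neq zf_neq.
rewrite -mulr_suml alt_box_sum sum_alt_expr_odd // expr_div_n mulrAC.
by rewrite mulfV ?mul1r // expf_neq0.
Qed.

End FieldFacts.

Section NonvanishingFactors.
Variable K : numDomainType.
Implicit Type z : K.

Lemma addr1_neq0 z : `|z| < 1 -> 1 + z != 0.
Proof.
move=> z1; apply/eqP => /eqP; rewrite addr_eq0 => /eqP one_eq.
by move: z1; rewrite -normrN -one_eq normr1 ltxx.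
Qed.

Lemma subr1_neq0 z : `|z| < 1 -> 1 - z != 0.
Proof. by move=> z1; apply: addr1_neq0; rewrite normrN. Qed.

Lemma addr1X_neq0 z l : `|z| < 1 -> 1 + z ^+ l != 0.
Proof.
case: l => [|l] z1; first by rewrite expr0 (_ : 1 + 1 = 2%:R) ?pnatr_eq0.
by apply: addr1_neq0; rewrite normrX exprn_ilt1.
Qed.

End NonvanishingFactors.

Section PrincipalPower.
Variable R : realType.
Implicit Types (a b y : R) (q : R[i]).

Lemma sqrt1_sqr_div a b : a != 0 ->
  Num.sqrt (1 + (b / a) ^+ 2) = Num.sqrt (a ^+ 2 + b ^+ 2) / `|a|.
Proof.
move=> a0.
have -> : 1 + (b / a) ^+ 2 = (a ^+ 2 + b ^+ 2) * (`|a|^-1) ^+ 2.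
  by rewrite exprVn real_normK ?num_real //; field.
by rewrite sqrtrM ?addr_ge0 ?sqr_ge0 // sqrtr_sqr ger0_norm.
Qed.

Lemma polar_atan a b : a != 0 ->
  Num.sqrt (a ^+ 2 + b ^+ 2) * cos (atan (b / a)) = `|a| /\
  Num.sqrt (a ^+ 2 + b ^+ 2) * sin (atan (b / a)) = b * `|a| / a.
Proof.
move=> a0; set rho := Num.sqrt _.
have rho_gt0 : 0 < rho.
  have := sqr_ge0 b; have : 0 < a ^+ 2 by rewrite exprn_even_gt0.
  by rewrite sqrtr_gt0; lra.
have cos_eq : cos (atan (b / a)) = `|a| / rho by rewrite cos_atan sqrt1_sqr_div // invf_div.
have sin_eq : sin (atan (b / a)) = b / a * cos (atan (b / a)).
  have := atanK (b / a); rewrite /tan => tan_eq.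
  rewrite -[X in _ = X * _]tan_eq divfK // cos_atan invr_eq0 gt_eqF // sqrtr_gt0.
  by have := sqr_ge0 (b / a); lra.
split; first by rewrite cos_eq mulrCA mulfV ?gt_eqF // mulr1.
by rewrite sin_eq cos_eq; field; rewrite a0 gt_eqF.
Qed.

Lemma polar_carg a b : a +i* b != 0 ->
  Num.sqrt (a ^+ 2 + b ^+ 2) * cos (carg (a +i* b)) = a /\
  Num.sqrt (a ^+ 2 + b ^+ 2) * sin (carg (a +i* b)) = b.
Proof.
move=> ab_neq0; rewrite /carg /=.
have cosBpi (t : R) : cos (t - pi) = - cos t by rewrite -[in RHS](subrK pi t) cosDpi opprK.
have sinBpi (t : R) : sin (t - pi) = - sin t by rewrite -[in RHS](subrK pi t) sinDpi opprK.
case: (ltgtP 0 a) => [a_gt0|a_lt0|a0].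
- have [] := polar_atan a b (lt0r_neq0 a_gt0); rewrite gtr0_norm // => -> ->.
  by rewrite mulfK ?gt_eqF.
- have [] := polar_atan a b (ltr0_neq0 a_lt0).
  rewrite ltr0_norm // mulrN mulNr mulfK ?lt_eqF //.
  by case: ifP => _; rewrite ?cosDpi ?sinDpi ?cosBpi ?sinBpi !mulrN => -> ->; rewrite !opprK.
- rewrite -a0 expr0n add0r sqrtr_sqr.
  case: (ltgtP 0 b) => [b_gt0|b_lt0|b0].
  + by rewrite cos_pihalf sin_pihalf mulr0 mulr1 gtr0_norm.
  + by rewrite cosN sinN cos_pihalf sin_pihalf mulr0 mulrN mulr1 ltr0_norm ?opprK.
  + by move: ab_neq0; rewrite -a0 -b0 eq_complex /= eqxx.
Qed.

Lemma qpowD1 q y : qpow q (y + 1) = q * qpow q y.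
Proof.
rewrite /qpow; have [->|] := eqVneq q 0; first by rewrite mul0r.
case: q => a b ab_neq0 /=; have [cos_eq sin_eq] := polar_carg a b ab_neq0.
set rho := Num.sqrt _ in cos_eq sin_eq *; set th := carg _ in cos_eq sin_eq *.
have rho_neq0 : rho != 0.
  apply: contra ab_neq0 => /eqP rho0.
  by move: cos_eq sin_eq; rewrite rho0 !mul0r => <- <-.
rewrite powRD ?rho_neq0 ?implybT // powRr1 ?sqrtr_ge0 // mulrDl mul1r cosD sinD.
rewrite -cos_eq -sin_eq; apply/eqP; rewrite eq_complex /=.
by apply/andP; split; apply/eqP; ring.
Qed.

Lemma qpowDn q k y : qpow q (k%:R + y) = q ^+ k * qpow q y.
Proof.
elim: k => [|k IHk]; first by rewrite add0r expr0 mul1r.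
by rewrite -addn1 natrD addrAC qpowD1 IHk addn1 exprS mulrA.
Qed.

End PrincipalPower.

Section ComplexLimits.
Context {R : realType} {T : Type} {F : set_system T} {FF : Filter F}.

Lemma Re_le_normc (z : R[i]) :
  `|complex.Re z| <= Num.sqrt (complex.Re z ^+ 2 + complex.Im z ^+ 2).
Proof. by rewrite -sqrtr_sqr ler_wsqrtr // lerDl sqr_ge0. Qed.

Lemma Im_le_normc (z : R[i]) :
  `|complex.Im z| <= Num.sqrt (complex.Re z ^+ 2 + complex.Im z ^+ 2).
Proof. by rewrite -sqrtr_sqr ler_wsqrtr // lerDr sqr_ge0. Qed.

Lemma cvg_Re {u : T -> R[i]^o} {L : R[i]^o} :
  u @ F --> L -> (fun t => complex.Re (u t)) @ F --> complex.Re L.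
Proof.
move=> /cvgrPdist_lt uL; apply/cvgrPdist_lt => e e_gt0.
apply: filterS (uL e%:C _) => [t|]; last by rewrite ltcR.
by rewrite normc_def ltcR -raddfB; apply: le_lt_trans (Re_le_normc _).
Qed.

Lemma cvg_Im {u : T -> R[i]^o} {L : R[i]^o} :
  u @ F --> L -> (fun t => complex.Im (u t)) @ F --> complex.Im L.
Proof.
move=> /cvgrPdist_lt uL; apply/cvgrPdist_lt => e e_gt0.
apply: filterS (uL e%:C _) => [t|]; last by rewrite ltcR.
by rewrite normc_def ltcR -raddfB; apply: le_lt_trans (Im_le_normc _).
Qed.

Lemma normc_real (v : R) : `|v%:C| = `|v|%:C.
Proof. by rewrite normc_def /= expr0n /= addr0 sqrtr_sqr. Qed.

Lemma cvg_real_complex {v : T -> R} {l : R} :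
  v @ F --> l -> (fun t => (v t)%:C : R[i]^o) @ F --> (l%:C : R[i]^o).
Proof.
move=> /cvgrPdist_lt vl; apply/cvgrPdist_lt => -[e e'].
rewrite ltcE /= => /andP[/eqP -> e_gt0]; apply: filterS (vl e e_gt0) => t.
by rewrite -rmorphB normc_real ltcR.
Qed.

Lemma cvg_sum_complex (L : nat) (g : nat -> T -> R[i]^o) (a : nat -> R[i]^o) :
  (forall l, (l < L)%N -> g l @ F --> a l) ->
  (fun t => \sum_(l < L) g l t) @ F --> \sum_(l < L) a l.
Proof. by move=> ga; apply: cvg_big => // [|l _]; [exact: add_continuous | exact: ga]. Qed.

Lemma cvg_exprn {u : T -> R[i]^o} {a : R[i]^o} k :
  u @ F --> a -> (fun t => u t ^+ k) @ F --> a ^+ k.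
Proof.
move=> ua; elim: k => [|k IHk].
  rewrite expr0; under eq_fun do rewrite expr0; exact: cvg_cst.
rewrite exprS; under eq_fun do rewrite exprS; exact: (cvgM ua IHk).
Qed.

End ComplexLimits.

Section AbelSummation.
Variable R : realType.

Lemma cvg_expr_complex (w : R[i]) :
  `|w| < 1 -> (fun N => w ^+ N : R[i]^o) @ \oo --> (0 : R[i]^o).
Proof.
move=> w1; apply: norm_cvg0.
have normE : `|w| = (complex.Re `|w|)%:C by rewrite normc_def.
have Rew1 : `|complex.Re `|w| | < 1.
  rewrite ger0_norm; last by rewrite normc_def /= sqrtr_ge0.
  by move: w1; rewrite {1}normE -[1]/(1%:C) ltcR.
under eq_fun do rewrite normrX normE -rmorphXn.
exact: cvg_real_complex (cvg_expr Rew1).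
Qed.

Lemma clim_cvg (u : nat -> R[i]^o) (L : R[i]^o) : u @ \oo --> L -> clim u = L.
Proof.
move=> uL; rewrite /clim (norm_cvg_lim (cvg_Re uL)) (norm_cvg_lim (cvg_Im uL)).
by case: L {uL}.
Qed.

Lemma cabel_cvg (g h : R -> R[i]) (L : R[i]) :
  (\forall s \near (1:R)^'-, g s = h s) ->
  (h : R -> R[i]^o) @ (1:R)^'- --> (L : R[i]^o) -> cabel g = L.
Proof.
move=> gh hL; rewrite /cabel.
rewrite (norm_cvg_lim (_ : _ @ (1:R)^'- --> complex.Re L)); last first.
  apply: cvg_trans (cvg_Re hL); apply: near_eq_cvg.
  by apply: filterS gh => s ->.
rewrite (norm_cvg_lim (_ : _ @ (1:R)^'- --> complex.Im L)); last first.
  apply: cvg_trans (cvg_Im hL); apply: near_eq_cvg.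
  by apply: filterS gh => s ->.
by case: L {hL}.
Qed.

Lemma cseries_geom (L : nat) (c w : nat -> R[i]) :
  (forall l, (l < L)%N -> `|w l| < 1) ->
  cseries (fun m => \sum_(l < L) c l * w l ^+ m) = \sum_(l < L) c l / (1 - w l).
Proof.
move=> w1; apply: clim_cvg.
have w_neq1 l : (l < L)%N -> w l != 1.
  by move=> /w1; apply: contraTneq => ->; rewrite normr1 ltxx.
have partial_sums N : \sum_(k < N) \sum_(l < L) c l * w l ^+ k
    = \sum_(l < L) c l * ((w l ^+ N - 1) / (w l - 1)).
  rewrite exchange_big; apply: eq_bigr => l _.
  by rewrite -mulr_sumr sum_expr_geom // w_neq1.
rewrite (funext partial_sums : _ = fun N : nat => _ : R[i]^o).
apply: (@cvg_sum_complex _ _ _ _ L (fun l N => c l * ((w l ^+ N - 1) / (w l - 1)))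
  (fun l => c l / (1 - w l))) => l l_lt.
have -> : c l / (1 - w l) = c l * ((0 - 1) / (w l - 1)).
  by rewrite sub0r mulN1r -invrN opprB.
apply: cvgMl_tmp; apply: cvgMr_tmp.
exact: cvgB (cvg_expr_complex _ (w1 _ l_lt)) (cvg_cst _).
Qed.

Lemma msum_geom (r L : nat) (c w : nat -> R[i]) :
  (forall l, (l < L)%N -> `|w l| < 1) ->
  Defs.msum r (fun N => \sum_(l < L) c l * w l ^+ N) = \sum_(l < L) c l / (1 - w l) ^+ r.
Proof.
move=> w1; elim: r c => [|r IHr] c /=.
  by apply: eq_bigr => l _; rewrite !expr0 invr1 mulr1.
have shifted m : Defs.msum r (fun k => \sum_(l < L) c l * w l ^+ (m + k)) =
    \sum_(l < L) (c l / (1 - w l) ^+ r) * w l ^+ m.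
  transitivity (\sum_(l < L) c l * w l ^+ m / (1 - w l) ^+ r).
    rewrite -(IHr (fun l => c l * w l ^+ m)); congr Defs.msum; apply/funext => k.
    by apply: eq_bigr => l _; rewrite exprD mulrA.
  by apply: eq_bigr => l _; rewrite mulrAC.
rewrite (funext shifted) (@cseries_geom L (fun l => c l / (1 - w l) ^+ r)) //.
apply: eq_bigr => l _.
by rewrite exprSr invfM mulrA.
Qed.


Lemma alt_qnum_expand (b p : R[i]) (s : R) (n N : nat) :
  (-1) ^+ N * (s ^+ N)%:C * ((1 - b ^+ N * p) / (1 - b)) ^+ n =
  \sum_(l < n.+1) ('C(n, l)%:R * (- p) ^+ l / (1 - b) ^+ n) * (- (s%:C * b ^+ l)) ^+ N.
Proof.
rewrite expr_div_n addrC exprD1n mulr_suml mulr_sumr; apply: eq_bigr => l _.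
have -> : (- (s%:C * b ^+ l)) ^+ N = (-1) ^+ N * s%:C ^+ N * (b ^+ N) ^+ l.
  by rewrite [LHS]exprNn exprMn exprAC mulrA.
have -> : (- (b ^+ N * p)) ^+ l = (- p) ^+ l * (b ^+ N) ^+ l.
  by rewrite -mulrN exprMn mulrC.
by rewrite rmorphXn -mulr_natl; ring.
Qed.

Lemma msum_alt_qnum (b : R[i]) (pw : R -> R[i]) (r n : nat) (x s : R) :
  `|b| < 1 -> (forall N : nat, pw (N%:R + x) = b ^+ N * pw x) -> `|s| < 1 ->
  Defs.msum r (fun N => (-1) ^+ N * (s ^+ N)%:C * qnum b pw (N%:R + x) ^+ n) =
  \sum_(l < n.+1) 'C(n, l)%:R * (- pw x) ^+ l / (1 - b) ^+ n / (1 + s%:C * b ^+ l) ^+ r.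
Proof.
move=> b1 pwD s1.
under eq_fun => N do rewrite /qnum pwD alt_qnum_expand.
rewrite (@msum_geom r n.+1 (fun l => 'C(n, l)%:R * (- pw x) ^+ l / (1 - b) ^+ n)
  (fun l => - (s%:C * b ^+ l))) => [|l _]; first by apply: eq_bigr => l _; rewrite opprK.
rewrite normrN normrM.
have bl1 : `|b ^+ l| <= 1 by rewrite normrX exprn_ile1 // ltW.
apply: le_lt_trans (ler_wpM2l (normr_ge0 _) bl1) _.
by rewrite mulr1 normc_real -[1]/(1%:C) ltcR.
Qed.

Lemma EulerGen_closed (b : R[i]) (pw : R -> R[i]) (r n : nat) (x : R) :
  `|b| < 1 -> (forall N : nat, pw (N%:R + x) = b ^+ N * pw x) ->
  EulerGen b pw r n x = (1 + b) ^+ r / (1 - b) ^+ n *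
     \sum_(l < n.+1) 'C(n, l)%:R * (- pw x) ^+ l / (1 + b ^+ l) ^+ r.
Proof.
move=> b1 pwD.
pose c l := 'C(n, l)%:R * (- pw x) ^+ l / (1 - b) ^+ n.
apply: (@cabel_cvg _ (fun s => (1 + b) ^+ r * \sum_(l < n.+1) c l / (1 + s%:C * b ^+ l) ^+ r)).
  near=> s; rewrite msum_alt_qnum //.
  rewrite ger0_norm; last by apply: ltW; near: s; apply: nbhs_left_gt; exact: ltr01.
  by near: s; exact: nbhs_left_lt.
have -> : (1 + b) ^+ r / (1 - b) ^+ n *
    \sum_(l < n.+1) 'C(n, l)%:R * (- pw x) ^+ l / (1 + b ^+ l) ^+ r =
    (1 + b) ^+ r * \sum_(l < n.+1) c l / (1 + (1 : R)%:C * b ^+ l) ^+ r.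
  rewrite -mulrA; congr (_ * _); rewrite mulr_sumr; apply: eq_bigr => l _.
  by rewrite rmorph1 mul1r /c; ring.
apply: cvgMl_tmp; apply: (@cvg_sum_complex _ _ _ _ n.+1
  (fun l s => c l / (1 + s%:C * b ^+ l) ^+ r)
  (fun l => c l / (1 + (1 : R)%:C * b ^+ l) ^+ r)) => l _.
apply: cvgMl_tmp; apply: cvgV.
  by rewrite rmorph1 mul1r expf_neq0 // addr1X_neq0.
apply: cvg_exprn; apply: cvgD (cvg_cst _) _; apply: cvgMr_tmp.
by apply: cvg_real_complex; apply: cvg_at_left_filter; exact: cvg_id.
Unshelve. all: by end_near.
Qed.

End AbelSummation.

Lemma qEuler_closed (R : realType) (q : R[i]) (r n : nat) (x : R) : `|q| < 1 ->
  qEuler q r n x = (1 + q) ^+ r / (1 - q) ^+ n *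
     \sum_(l < n.+1) 'C(n, l)%:R * (- qpow q x) ^+ l / (1 + q ^+ l) ^+ r.
Proof. by move=> q1; apply: EulerGen_closed => // N; exact: qpowDn. Qed.

Lemma qEuler_f_closed (R : realType) (q : R[i]) (f r n : nat) (y : R) :
  `|q| < 1 -> (0 < f)%N ->
  qEuler_f q f r n y = (1 + q ^+ f) ^+ r / (1 - q ^+ f) ^+ n *
     \sum_(l < n.+1) 'C(n, l)%:R * (- qpow q (f%:R * y)) ^+ l / (1 + (q ^+ f) ^+ l) ^+ r.
Proof.
move=> q1 f_gt0; apply: EulerGen_closed => [|N].
  by rewrite normrX exprn_ilt1 // -lt0n.
by rewrite mulrDr -natrM qpowDn exprM.
Qed.

Lemma alt_box_sum_qpow (R : realType) (q : R[i]) (r f l : nat) : `|q| < 1 -> odd f ->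
  \sum_(a : {ffun 'I_r -> 'I_f})
     (-1) ^+ (\sum_(i < r) (a i : nat))%N *
     q ^+ (l * \sum_(i < r) (a i : nat))%N / (1 + q ^+ (l * f)%N) ^+ r
  = ((1 + q ^+ l) ^+ r)^-1.
Proof.
move=> q1 f_odd; under eq_bigr do rewrite !exprM.
by rewrite alt_box_sum_odd // -?exprM addr1X_neq0.
Qed.

Lemma sum_qEuler_f (R : realType) (q : R[i]) (r n f : nat) (x : R) :
  `|q| < 1 -> (0 < f)%N ->
  \sum_(a : {ffun 'I_r -> 'I_f})
     (-1) ^+ (\sum_(i < r) (a i : nat))%N *
     qEuler_f q f r n (((\sum_(i < r) (a i : nat))%N%:R + x) / f%:R)
  = (1 + q ^+ f) ^+ r / (1 - q ^+ f) ^+ n *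
    \sum_(l < n.+1) 'C(n, l)%:R * (- qpow q x) ^+ l *
      \sum_(a : {ffun 'I_r -> 'I_f})
        (-1) ^+ (\sum_(i < r) (a i : nat))%N *
        q ^+ (l * \sum_(i < r) (a i : nat))%N / (1 + q ^+ (l * f)%N) ^+ r.
Proof.
move=> q1 f_gt0.
have f_neq0 : (f%:R : R) != 0 by rewrite pnatr_eq0 -lt0n.
have unscale (y : R) : f%:R * (y / f%:R) = y by rewrite mulrC divfK.
under eq_bigr => a _ do rewrite qEuler_f_closed // unscale qpowDn mulrCA mulr_sumr.
rewrite -mulr_sumr exchange_big /=; congr (_ * _); apply: eq_bigr => l _.
rewrite mulr_sumr; apply: eq_bigr => a _.
by rewrite -!exprM mulnC -mulrN exprMn -exprM mulnC; ring.
Qed.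

Lemma qEuler_alt_box_sum (R : realType) (q : R[i]) (r n f : nat) (x : R) :
  `|q| < 1 -> odd f ->
  qEuler q r n x =
    (1 + q) ^+ r / (1 - q) ^+ n *
    \sum_(l < n.+1) 'C(n, l)%:R * (- qpow q x) ^+ l *
      \sum_(a : {ffun 'I_r -> 'I_f})
        (-1) ^+ (\sum_(i < r) (a i : nat))%N *
        q ^+ (l * \sum_(i < r) (a i : nat))%N / (1 + q ^+ (l * f)%N) ^+ r.
Proof.
move=> q1 f_odd; rewrite qEuler_closed //; congr (_ * _).
by apply: eq_bigr => l _; rewrite alt_box_sum_qpow.
Qed.

Theorem theorem4 (R : realType) (q : R[i]) (r n f : nat) (x : R) :
  `|q| < 1 -> (0 < r)%N -> (forall k : nat, x != - k%:R) -> odd f ->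
  qEuler q r n x =
    ((1 + q) / (1 + q ^+ f)) ^+ r * ((1 - q ^+ f) / (1 - q)) ^+ n *
    \sum_(a : {ffun 'I_r -> 'I_f})
       (-1) ^+ (\sum_(i < r) (a i : nat))%N *
       qEuler_f q f r n (((\sum_(i < r) (a i : nat))%N%:R + x) / f%:R)
  /\
  qEuler q r n x =
    (1 + q) ^+ r / (1 - q) ^+ n *
    \sum_(l < n.+1) 'C(n, l)%:R * (- qpow q x) ^+ l *
      \sum_(a : {ffun 'I_r -> 'I_f})
        (-1) ^+ (\sum_(i < r) (a i : nat))%N *
        q ^+ (l * \sum_(i < r) (a i : nat))%N / (1 + q ^+ (l * f)%N) ^+ r.
Proof.
move=> q1 _ _ f_odd.
have f_gt0 : (0 < f)%N by case: f f_odd.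
have qf1 : `|q ^+ f| < 1 by rewrite normrX exprn_ilt1 // -lt0n.
split; last exact: qEuler_alt_box_sum.
rewrite sum_qEuler_f // mulrA [LHS](@qEuler_alt_box_sum R q r n f x q1 f_odd); congr (_ * _).
rewrite !expr_div_n; field.
by rewrite !expf_neq0 ?addr1X_neq0 ?subr1_neq0.
Qed.
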